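(* Let $\alpha, \lambda \in (0,1)$, let $k \ge 1$ be an integer, let $V_1,\dots,V_k$ be finite sets, and let $d$ be an integer with $2 \le d \le \min\{|V_1|,\dots,|V_k|\}$. Suppose that $\mathcal{H} \subseteq V_1 \times \dots \times V_k$ satisfies \[ |\mathcal{H}| \le (\alpha\lambda)^k \prod_{i=1}^k |V_i|. \] Then for all but at most \[ (d^k - 1)\,(2\alpha^\lambda)^d \prod_{i=1}^k \binom{|V_i|}{d} \] choices of $W_1 \in \binom{V_1}{d}, \dots, W_k \in \binom{V_k}{d}$, we have \[ |\mathcal{H} \cap (W_1 \times \dots \times W_k)| \le k\lambda d^k. \]
   Context: $\binom{V}{d}$ denotes the family of all $d$-element subsets of $V$. *)

From HB Require Import structures.
From mathcomp Require Import all_boot all_order all_algebra.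
From mathcomp Require Import reals exp.
Set Implicit Arguments. Unset Strict Implicit. Unset Printing Implicit Defensive.
Import Order.TTheory GRing.Theory Num.Theory.

Definition prodset (T : finType) (k : nat) (V : 'I_k -> {set T})
  : {set {ffun 'I_k -> T}} := [set f : {ffun 'I_k -> T} | [forall i, f i \in V i]].

Definition dchoices (T : finType) (k d : nat) (V : 'I_k -> {set T})
  : {set {ffun 'I_k -> {set T}}} :=
  [set W : {ffun 'I_k -> {set T}} | [forall i, (W i \subset V i) && (#|W i| == d)]].

From HB Require Import structures.
From mathcomp Require Import all_boot all_order all_algebra.
From mathcomp Require Import reals exp.
From mathcomp Require Import zify ring lra.
Import Order.TTheory GRing.Theory Num.Theory.
Set Implicit Arguments. Unset Strict Implicit. Unset Printing Implicit Defensive.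

(* Induction on the number of coordinates.  Fix a coordinate j and call x in V_j
   heavy when its fiber H_x = {f in H | f j = x} exceeds the cap
   (alpha lambda)^(k-1) prod_(i <> j) |V_i|; by Markov at most
   alpha lambda |V_j| points are heavy.  A box W is dense only if W_j contains
   more than lambda d heavy points, which happens for at most a fraction
   (2 alpha^lambda)^d of the d-subsets of V_j (count their t-subsets of heavy
   points, t the least integer above lambda d), or if W is dense for the fiber
   of some light x in W_j, which the induction hypothesis controls; as x lies
   in a fraction d/|V_j| of the d-subsets, this case costs a factor d.  Since
   d >= 2, the total q N + d (d^(k-1) - 1) q N stays below (d^k - 1) q N,
   where q = (2 alpha^lambda)^d and N = prod_i 'C(|V_i|, d). *)

Lemma bin_mul_subset n d t : t <= d <= n ->
  'C(n, t) * 'C(n - t, d - t) = 'C(n, d) * 'C(d, t).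
Proof.
case/andP=> td dn.
have f_nt := bin_fact (leq_trans td dn); have f_nd := bin_fact dn.
have f_dt := bin_fact td.
have f_ntdt : 'C(n - t, d - t) * ((d - t)`! * (n - d)`!) = (n - t)`!.
  have -> : n - d = (n - t) - (d - t) by lia.
  by apply: bin_fact; lia.
apply/eqP; rewrite -(eqn_pmul2r (_ : 0 < t`! * (d - t)`! * (n - d)`!)); last first.
  by rewrite !muln_gt0 !fact_gt0.
have -> : ('C(n, t) * 'C(n - t, d - t) * (t`! * (d - t)`! * (n - d)`!)
    = 'C(n, t) * (t`! * ('C(n - t, d - t) * ((d - t)`! * (n - d)`!)))) by ring.
have -> : ('C(n, d) * 'C(d, t) * (t`! * (d - t)`! * (n - d)`!)
    = 'C(n, d) * ('C(d, t) * (t`! * (d - t)`!) * (n - d)`!)) by ring.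
by rewrite f_ntdt f_dt f_nt f_nd.
Qed.

Lemma leq_bin_mul_exp s n t : s <= n -> 'C(s, t) * n ^ t <= 'C(n, t) * s ^ t.
Proof.
move=> sn; elim: t => [|t IH]; first by rewrite !bin0.
rewrite -(leq_pmul2l (ltn0Sn t)) !expnS.
have -> : (t.+1 * ('C(s, t.+1) * (n * n ^ t))
    = (t.+1 * 'C(s, t.+1)) * n ^ t * n) by ring.
have -> : (t.+1 * ('C(n, t.+1) * (s * s ^ t))
    = (t.+1 * 'C(n, t.+1)) * s ^ t * s) by ring.
rewrite !mul_bin_left.
have -> : ((s - t) * 'C(s, t) * n ^ t * n = ('C(s, t) * n ^ t) * ((s - t) * n)) by ring.
have -> : ((n - t) * 'C(n, t) * s ^ t * s = ('C(n, t) * s ^ t) * ((n - t) * s)) by ring.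
by apply: leq_mul => //; nia.
Qed.

Lemma leq_bin_exp2 d t : 'C(d, t) <= 2 ^ d.
Proof.
rewrite -[d in 'C(d, _)]card_ord -cardsT -cards_draws -[d in (_ <= 2 ^ d)]card_ord.
rewrite -cardsT -card_powerset; apply: subset_leq_card.
by apply/subsetP => A; rewrite !inE => /andP[].
Qed.

Lemma leq_card_bigcup (I U : finType) (r : {set I}) (F : I -> {set U}) :
  #|\bigcup_(i in r) F i| <= \sum_(i in r) #|F i|.
Proof.
elim/big_rec2: _ => [|i n A _ IH]; first by rewrite cards0.
by apply: leq_trans (leq_card_setU _ _) _; rewrite leq_add2l.
Qed.

Section DSubsets.

Variable T : finType.
Implicit Types V B S : {set T}.

Definition dsubsets V (d : nat) : {set {set T}} :=
  [set A : {set T} | A \subset V & #|A| == d].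

Lemma card_dsubsets V d : #|dsubsets V d| = 'C(#|V|, d).
Proof. exact: cards_draws. Qed.

Lemma exists_dsubset V t : t <= #|V| -> exists B, B \in dsubsets V t.
Proof. by rewrite -bin_gt0 -card_dsubsets => /card_gt0P. Qed.

Lemma card_dsubsets_sup V B d : B \subset V -> #|B| <= d ->
  #|[set A in dsubsets V d | B \subset A]| <= 'C(#|V| - #|B|, d - #|B|).
Proof.
move=> BV Bd; have -> : #|V| - #|B| = #|V :\: B| by rewrite cardsD (setIidPr BV).
rewrite -card_dsubsets.
rewrite -(@card_in_imset _ _ (fun A => A :\: B)); last first.
  move=> A1 A2; rewrite !inE => /andP[_ BA1] /andP[_ BA2] eqAB.
  by rewrite -(setID A1 B) -(setID A2 B) (setIidPr BA1) (setIidPr BA2) eqAB.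
apply/subset_leq_card/subsetP => _ /imsetP[A + ->]; rewrite !inE.
case/andP=> /andP[AV /eqP cardA] BA.
by rewrite setSD //= cardsD (setIidPr BA) cardA.
Qed.

Lemma card_dsubsets_meet V S d t : S \subset V -> t <= d ->
  #|[set A in dsubsets V d | t <= #|A :&: S|]| <= 'C(#|S|, t) * 'C(#|V| - t, d - t).
Proof.
move=> SV td.
have cover : [set A in dsubsets V d | t <= #|A :&: S|]
    \subset \bigcup_(B in dsubsets S t) [set A in dsubsets V d | B \subset A].
  apply/subsetP => A; rewrite inE => /andP[AV /exists_dsubset[B]].
  rewrite inE subsetI => /andP[/andP[BA BS] cardB].
  by apply/bigcupP; exists B; rewrite inE ?BS ?cardB ?AV.
apply: leq_trans (subset_leq_card cover) _; apply: leq_trans (leq_card_bigcup _ _) _.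
rewrite -card_dsubsets -sum_nat_const; apply: leq_sum => B; rewrite inE.
case/andP=> BS /eqP cardB; rewrite -cardB card_dsubsets_sup ?cardB //.
exact: subset_trans SV.
Qed.

End DSubsets.

Definition ffun_upd (I : finType) (U : Type) (f : {ffun I -> U}) (j : I) (u : U) :
  {ffun I -> U} := [ffun i => if i == j then u else f i].

Section Boxes.

Variables I T : finType.
Implicit Types (j : I) (x : T) (J : {set I}) (H : {set {ffun I -> T}}).
Implicit Types (W : {ffun I -> {set T}}).

Definition box_count J H W : nat := #|[set f in H | [forall i in J, f i \in W i]]|.

Definition fiber H (j : I) (x : T) : {set {ffun I -> T}} := [set f in H | f j == x].

(* A subset of the product over the coordinates in [J] is modelled by [H] with
   [coord_inj J H]: the coordinates of [f] outside [J] are ignored. *)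
Definition coord_inj J H :=
  {in H &, forall f g : {ffun I -> T}, {in J, f =1 g} -> f = g}.

Lemma card_fiber_sum H j (A : {set T}) : {in H, forall f : {ffun I -> T}, f j \in A} ->
  #|H| = \sum_(x in A) #|fiber H j x|.
Proof.
move=> HA; rewrite -sum1_card (partition_big (fun f : {ffun I -> T} => f j) (mem A)) //=.
by apply: eq_bigr => x _; rewrite -sum1_card; apply: eq_bigl => f; rewrite inE.
Qed.

Lemma box_count_fiber J H W j : j \in J ->
  box_count J H W = \sum_(x in W j) box_count (J :\ j) (fiber H j x) W.
Proof.
move=> jJ; rewrite /box_count (@card_fiber_sum _ j (W j)); last first.
  by move=> f; rewrite inE => /andP[_ /forall_inP]; apply.
apply: eq_bigr => x xW; apply: eq_card => f; rewrite !inE.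
case: (f \in H) => //=; case: eqP => [fx|]; rewrite ?andbF //= andbT.
apply/forall_inP/forall_inP => fW i; first by case/setD1P=> _; apply: fW.
by case: (eqVneq i j) => [-> _|ij iJ]; [rewrite fx | apply: fW; rewrite !inE ij].
Qed.

Lemma box_count_upd J H W j A : j \notin J ->
  box_count J H (ffun_upd W j A) = box_count J H W.
Proof.
move=> jJ; apply: eq_card => f; rewrite !inE; congr (_ && _).
apply: eq_forallb_in => i iJ; rewrite ffunE; case: eqP => // ij.
by rewrite -ij iJ in jJ.
Qed.

Lemma fiber_coord_inj J H j x : coord_inj J H -> coord_inj (J :\ j) (fiber H j x).
Proof.
move=> Hinj f g; rewrite !inE => /andP[fH /eqP fx] /andP[gH /eqP gx] fg.
apply: Hinj => // i iJ; case: (eqVneq i j) => [->|ij]; first by rewrite fx gx.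
by apply: fg; rewrite !inE ij.
Qed.

(* Encoding [f] by its coordinates in [J] (and [None] elsewhere) embeds the
   boxed part of [H] into a product of [#|J|] sets of size [d]. *)
Lemma box_count_le J H W d : coord_inj J H -> {in J, forall i, #|W i| = d} ->
  (box_count J H W <= d ^ #|J|).
Proof.
move=> Hinj Wd.
pose code (f : {ffun I -> T}) := [ffun i => if i \in J then Some (f i) else None].
pose F i : {set option T} := if i \in J then Some @: W i else [set None].
rewrite /box_count -(@card_in_imset _ _ code); last first.
  move=> f g /setIdP[fH _] /setIdP[gH _] /ffunP fg; apply: Hinj => // i iJ.
  by move: (fg i); rewrite !ffunE iJ => -[].
apply: leq_trans (subset_leq_card (_ : _ \subset setXn F)) _.
  apply/subsetP => _ /imsetP[f /setIdP[_ /forall_inP fW] ->].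
  apply/setXnP => i; rewrite /F ffunE; case: ifP => iJ; last by rewrite inE.
  by rewrite imset_f ?fW.
rewrite cardsXn -prod_nat_const [leqLHS](bigID (mem J)) /=.
rewrite [X in (_ * X)]big1 ?muln1; last by move=> i /negbTE iJ; rewrite /F iJ cards1.
apply: leq_prod => i iJ; rewrite /F iJ card_imset ?Wd //; exact: Some_inj.
Qed.

End Boxes.

Local Open Scope ring_scope.

Lemma card_dsubsets_dense (R : realType) (al la : R) (T : finType) (V S : {set T}) d :
  0 < al <= 1 -> 0 <= la < 1 -> (0 < d <= #|V|)%N -> S \subset V ->
  #|S|%:R <= al * la * #|V|%:R ->
  #|[set A in dsubsets V d | la * d%:R < #|A :&: S|%:R]|%:R
    <= (2 * al `^ la) ^+ d * 'C(#|V|, d)%:R.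
Proof.
move=> /andP[al0 al1] /andP[la0 la1] /andP[d0 dV] SV hS.
set n := #|V|; set s := #|S|.
have d0R : 0 < d%:R :> R by rewrite ltr0n.
have [|t la_t t_min] := ex_minnP (_ : exists t, la * d%:R < t%:R).
  by exists d; nra.
have td : (t <= d)%N by apply: t_min; nra.
have count : (#|[set A in dsubsets V d | (la * d%:R < #|A :&: S|%:R)%R]|
    <= 'C(s, t) * 'C(n - t, d - t))%N.
  apply: leq_trans (card_dsubsets_meet SV td); apply/subset_leq_card/subsetP => A.
  by rewrite !inE => /andP[-> /t_min].
have ratio : ('C(s, t) * 'C(n - t, d - t) * n ^ t <= 'C(n, d) * 2 ^ d * s ^ t)%N.
  apply: (@leq_trans ('C(n - t, d - t) * ('C(n, t) * s ^ t))).
    by rewrite mulnAC mulnC leq_mul2l leq_bin_mul_exp ?orbT ?subset_leq_card.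
  rewrite mulnA [('C(n - t, _) * _)%N]mulnC bin_mul_subset ?td //.
  by rewrite -mulnA -[leqRHS]mulnA leq_mul2l leq_mul2r leq_bin_exp2 !orbT.
have sR : (s%:R : R) ^+ t <= (al * la) ^+ t * n%:R ^+ t.
  by rewrite -exprMn; apply: lerXn2r; rewrite // nnegrE ?ler0n ?mulr_ge0 ?(ltW al0).
have alR : (al * la) ^+ t <= (al `^ la) ^+ d.
  apply: (@le_trans _ _ (al ^+ t)); first by apply: lerXn2r; rewrite ?nnegrE; nra.
  rewrite -!powR_mulrn ?powR_ge0 ?(ltW al0) // -powRrM.
  by apply: ger_powR; [rewrite al0 | exact: ltW].
have n0 : 0 < (n%:R : R) ^+ t by rewrite exprn_gt0 // ltr0n (leq_trans d0).
rewrite -(ler_pM2r n0).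
apply: (@le_trans _ _ ('C(s, t) * 'C(n - t, d - t) * n ^ t)%:R).
  by rewrite natrM natrX ler_wpM2r ?exprn_ge0 ?ler0n ?ler_nat.
apply: (@le_trans _ _ ('C(n, d) * 2 ^ d * s ^ t)%:R); first by rewrite ler_nat.
have -> : (2 * al `^ la) ^+ d * 'C(n, d)%:R * n%:R ^+ t
    = 'C(n, d)%:R * 2 ^+ d * ((al `^ la) ^+ d * n%:R ^+ t) by rewrite exprMn; ring.
rewrite !natrM !natrX ler_wpM2l ?mulr_ge0 ?exprn_ge0 ?ler0n //.
by apply: le_trans sR _; rewrite ler_wpM2r ?exprn_ge0 ?ler0n.
Qed.

Section DChoices.

Variables (T : finType) (k d : nat) (V : 'I_k -> {set T}).
Implicit Types (W : {ffun 'I_k -> {set T}}) (j : 'I_k).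

Lemma dchoicesP W : reflect (forall i, W i \in dsubsets (V i) d) (W \in dchoices d V).
Proof. by rewrite inE; apply: (iffP forallP) => WV i; move: (WV i); rewrite inE. Qed.

Lemma card_dchoices : #|dchoices d V| = \prod_(i < k) 'C(#|V i|, d).
Proof.
rewrite -(eq_bigr _ (fun i _ => card_dsubsets (V i) d)) -cardsXn.
by apply: eq_card => W; apply/dchoicesP/setXnP.
Qed.

Lemma ffun_upd_dchoices W j A :
  W \in dchoices d V -> A \in dsubsets (V j) d -> ffun_upd W j A \in dchoices d V.
Proof.
move=> /dchoicesP WV AV; apply/dchoicesP => i; rewrite ffunE.
by case: eqP => [->|].
Qed.

(* Swapping the [j]-th coordinate of [W] with a fresh [A] is a bijection on
   pairs (W, A) that exchanges the two sides. *)
Lemma card_dchoices_coord j (P : pred {ffun 'I_k -> {set T}}) (Q : pred {set T}) :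
  (forall W A, P (ffun_upd W j A) = P W) ->
  (#|[set W in dchoices d V | P W && Q (W j)]| * #|dsubsets (V j) d|
   = #|[set W in dchoices d V | P W]| * #|[set A in dsubsets (V j) d | Q A]|)%N.
Proof.
move=> P_upd; rewrite -!cardsX.
pose swap (p : {ffun 'I_k -> {set T}} * {set T}) := (ffun_upd p.1 j p.2, p.1 j).
have swapK : involutive swap.
  move=> [W A]; rewrite /swap /= ffunE eqxx; congr (_, _).
  by apply/ffunP => i; rewrite !ffunE; case: eqP => [->|].
set X := setX _ _; set Y := setX _ _.
have sXY : swap @: X \subset Y.
  apply/subsetP => _ /imsetP[[W A] /setXP[/setIdP[WD /andP[PW QW]] AV] ->].
  apply/setXP; split; apply/setIdP; split => //=; last by move/dchoicesP: WD.
    exact: ffun_upd_dchoices.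
  by rewrite P_upd.
have sYX : swap @: Y \subset X.
  apply/subsetP => _ /imsetP[[W A] /setXP[/setIdP[WD PW] /setIdP[AV QA]] ->].
  apply/setXP; split => /=; last by move/dchoicesP: WD.
  by rewrite inE ffun_upd_dchoices ?P_upd ?PW // ffunE eqxx.
move: (subset_leq_card sXY) (subset_leq_card sYX).
by rewrite !(card_imset _ (inv_inj swapK)) => XY YX; apply/eqP; rewrite eqn_leq XY YX.
Qed.

End DChoices.

Lemma card_superlevel_mul_le_sum (R : numDomainType) (U : finType) (A : {set U})
    (a : U -> R) (c : R) :
  (forall x, 0 <= a x) -> #|[set x in A | c <= a x]|%:R * c <= \sum_(x in A) a x.
Proof.
move=> a0; rewrite mulr_natl -sumr_const.
apply: (@le_trans _ _ (\sum_(x in [set x in A | c <= a x]) a x)).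
  by apply: ler_sum => x; rewrite inE => /andP[].
by rewrite setIdE [leRHS](big_setID [set x | c <= a x]) /= lerDl sumr_ge0.
Qed.

Section DenseBoxes.

Variables (R : realType) (al la : R) (T : finType) (k d : nat) (V : 'I_k -> {set T}).
Hypotheses (al01 : 0 < al < 1) (la01 : 0 < la < 1) (d2 : (2 <= d)%N).
Hypothesis dV : forall i, (d <= #|V i|)%N.
Implicit Types (J : {set 'I_k}) (H : {set {ffun 'I_k -> T}}).

Local Notation q := ((2 * al `^ la) ^+ d).
Local Notation N := (\prod_(i < k) ('C(#|V i|, d)%:R : R)).

Definition dense_boxes m J H :=
  [set W in dchoices d V | m%:R * la * (d ^ m)%:R < (box_count J H W)%:R].

Definition box_cap m J : R :=
  (al * la) ^+ m * \prod_(i in J) (#|V i|%:R : R).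

Lemma box_cap_gt0 m J : 0 < box_cap m J.
Proof.
case/andP: al01 => al0 _; case/andP: la01 => la0 _.
rewrite mulr_gt0 ?exprn_gt0 ?mulr_gt0 // prodr_gt0 // => i _.
by rewrite ltr0n (leq_trans _ (dV i)) // ltnW.
Qed.

Lemma dense_boxes0 J H : #|J| = 0%N -> #|H|%:R < box_cap 0 J -> dense_boxes 0 J H = set0.
Proof.
move=> /cards0_eq ->; rewrite /box_cap big_set0 expr0 mulr1 ltrn1 ltnS leqn0.
move=> /eqP /cards0_eq ->; apply/setP => W; rewrite !inE.
have -> : box_count set0 set0 W = 0%N.
  by apply/eqP; rewrite cards_eq0 -subset0; apply/subsetP => f; rewrite inE => /andP[].
by rewrite !mul0r ltxx andbF.
Qed.

Section Step.

Variables (m : nat) (J : {set 'I_k}) (j : 'I_k) (H : {set {ffun 'I_k -> T}}).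
Hypothesis IH : forall J' H', #|J'| = m ->
  {in H', forall f : {ffun 'I_k -> T}, {in J', forall i, f i \in V i}} ->
  coord_inj J' H' -> #|H'|%:R < box_cap m J' ->
  #|dense_boxes m J' H'|%:R <= ((d ^ m)%:R - 1) * q * N.
Hypotheses (jJ : j \in J) (cardJ : #|J| = m.+1).
Hypothesis HV : {in H, forall f : {ffun 'I_k -> T}, {in J, forall i, f i \in V i}}.
Hypotheses (Hinj : coord_inj J H) (HH : #|H|%:R <= box_cap m.+1 J).

Let J' := J :\ j.
Let heavy := [set x in V j | box_cap m J' <= #|fiber H j x|%:R].
Let dense_light x := [set W in dense_boxes m J' (fiber H j x) | x \in W j].

Lemma card_J' : #|J'| = m.
Proof. by move: cardJ; rewrite (cardsD1 j J) jJ => -[]. Qed.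

Lemma card_heavy : #|heavy|%:R <= al * la * #|V j|%:R.
Proof.
have cap_split : box_cap m.+1 J = al * la * #|V j|%:R * box_cap m J'.
  rewrite /box_cap (bigD1 j) //= exprS.
  by rewrite (eq_bigl (mem J')) => [|i]; [ring | rewrite !inE andbC].
rewrite -(ler_pM2r (box_cap_gt0 m J')) -cap_split; apply: le_trans HH.
rewrite (@card_fiber_sum _ _ _ j (V j)) => [|f fH]; last exact: HV.
by rewrite natr_sum card_superlevel_mul_le_sum.
Qed.

(* Outside the two kinds of bad boxes, each of the [la * d] heavy points of
   [W j] contributes at most [d ^ m] and each of the [d] light points at most
   [m * la * d ^ m]. *)
Lemma dense_boxes_cover : dense_boxes m.+1 J H \subset
  [set W in dchoices d V | la * d%:R < #|W j :&: heavy|%:R]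
  :|: \bigcup_(x in V j :\: heavy) dense_light x.
Proof.
apply/subsetP => W /setIdP[WD dense_W]; rewrite inE.
case/boolP: (W \in _) => [//|]; rewrite inE WD /= -leNgt => few_heavy.
apply: contraLR dense_W => not_light; rewrite -leNgt.
case/dchoicesP/(_ j)/setIdP: (WD) => /subsetP WjV /eqP cardWj.
have box_le x : (box_count J' (fiber H j x) W <= d ^ m)%N.
  rewrite -card_J'; apply: box_count_le; first exact: fiber_coord_inj.
  by move=> i _; move/dchoicesP: WD => /(_ i); rewrite inE => /andP[_ /eqP].
have sparse x : x \in W j -> x \notin heavy ->
    (box_count J' (fiber H j x) W)%:R <= m%:R * la * (d ^ m)%:R.
  move=> xW xl; rewrite leNgt; apply: contra not_light => dense_x.
  apply/bigcupP; exists x; first by rewrite inE xl WjV.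
  by rewrite inE xW andbT inE WD.
rewrite (box_count_fiber _ _ jJ) natr_sum (bigID (mem heavy)) /=.
apply: (@le_trans _ _ (#|W j :&: heavy|%:R * (d ^ m)%:R + d%:R * (m%:R * la * (d ^ m)%:R))).
  apply: lerD.
    rewrite (eq_bigl (mem (W j :&: heavy))) => [|x]; last by rewrite !inE.
    rewrite mulr_natl -sumr_const; apply: ler_sum => x _; by rewrite ler_nat box_le.
  apply: (@le_trans _ _ (\sum_(x in W j | x \notin heavy) (m%:R * la * (d ^ m)%:R))).
    by apply: ler_sum => x /andP[]; apply: sparse.
  have -> : d%:R = #|W j|%:R :> R by rewrite cardWj.
  rewrite [#|W j|%:R * _]mulr_natl -sumr_const.
  rewrite [leRHS](bigID (mem heavy)) /= lerDr.
  by apply: sumr_ge0 => x _; rewrite !mulr_ge0 ?ler0n // ltW //; case/andP: la01.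
apply: (@le_trans _ _ (la * d%:R * (d ^ m)%:R + d%:R * (m%:R * la * (d ^ m)%:R))).
  by rewrite lerD2r ler_wpM2r ?ler0n.
rewrite expnS natrM -addn1 natrD; lra.
Qed.

Lemma card_dense_heavy :
  #|[set W in dchoices d V | la * d%:R < #|W j :&: heavy|%:R]|%:R <= q * N.
Proof.
have Cpos : 0 < ('C(#|V j|, d)%:R : R) by rewrite ltr0n bin_gt0.
have d0 : (0 < d <= #|V j|)%N by rewrite dV (leq_trans _ d2).
have heavyV : heavy \subset V j by apply/subsetP => x; rewrite inE => /andP[].
have al01' : 0 < al <= 1 by case/andP: al01 => -> /ltW.
have la01' : 0 <= la < 1 by case/andP: la01 => /ltW ->.
have tail := card_dsubsets_dense al01' la01' d0 heavyV card_heavy.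
have := @card_dchoices_coord _ _ d V j predT
  (fun A => la * d%:R < #|A :&: heavy|%:R) (fun _ _ => erefl).
have -> : #|[set W in dchoices d V | predT W]| = #|dchoices d V|.
  by apply: eq_card => W; rewrite inE andbT.
rewrite card_dsubsets => count.
rewrite -(ler_pM2r Cpos) -natrM (eq_card (B := [set W in dchoices d V | predT W &&
  (la * d%:R < #|W j :&: heavy|%:R)])) => [|W]; last by rewrite !inE.
rewrite count natrM card_dchoices natr_prod mulrAC mulrC ler_wpM2r //.
by apply: prodr_ge0 => i _; rewrite ler0n.
Qed.

Lemma card_dense_light :
  #|\bigcup_(x in V j :\: heavy) dense_light x|%:R <= d%:R * (((d ^ m)%:R - 1) * q * N).
Proof.
set K := ((d ^ m)%:R - 1) * q * N; set n := #|V j|.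
have d0 : (0 < d)%N by apply: leq_trans d2.
have Cpos : 0 < ('C(n, d)%:R : R) by rewrite ltr0n bin_gt0 dV.
have K0 : 0 <= K.
  rewrite !mulr_ge0 ?exprn_ge0 ?mulr_ge0 ?powR_ge0 ?subr_ge0 ?ler1n ?expn_gt0 ?d0 //.
  by apply: prodr_ge0 => i _; rewrite ler0n.
have per_point x : x \in V j :\: heavy ->
    #|dense_light x|%:R * 'C(n, d)%:R <= K * 'C(n.-1, d.-1)%:R.
  case/setDP=> xV xl.
  pose P W := m%:R * la * (d ^ m)%:R < (box_count J' (fiber H j x) W)%:R.
  have P_upd W A : P (ffun_upd W j A) = P W by rewrite /P box_count_upd // setD11.
  have := @card_dchoices_coord _ _ d V j P (fun A => x \in A) P_upd.
  rewrite card_dsubsets (eq_card (B := dense_light x)) => [count|W]; last first.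
    by rewrite !inE andbA.
  rewrite -natrM count natrM ler_pM ?ler0n //.
    apply: IH; first exact: card_J'.
    - by move=> f /setIdP[fH _] i /setD1P[_]; apply: HV.
    - exact: fiber_coord_inj.
    - by rewrite ltNge; move: xl; rewrite inE xV.
  have := @card_dsubsets_sup _ (V j) [set x] d; rewrite sub1set xV cards1 !subn1.
  move=> /(_ isT d0); rewrite ler_nat; apply: leq_trans.
  apply/subset_leq_card/subsetP => A.
  by rewrite !inE sub1set.
rewrite -(ler_pM2r Cpos).
apply: (@le_trans _ _ ((\sum_(x in V j :\: heavy) #|dense_light x|)%:R * 'C(n, d)%:R)).
  by rewrite ler_wpM2r ?ler0n // ler_nat leq_card_bigcup.
rewrite natr_sum mulr_suml.
apply: (@le_trans _ _ (\sum_(x in V j :\: heavy) K * 'C(n.-1, d.-1)%:R)).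
  exact: ler_sum.
rewrite sumr_const -[_ *+ #|_|]mulr_natl.
apply: (@le_trans _ _ (n%:R * (K * 'C(n.-1, d.-1)%:R))).
  apply: ler_wpM2r; first by rewrite mulr_ge0 ?ler0n.
  by rewrite ler_nat subset_leq_card // subsetDl.
by rewrite mulrCA -natrM mul_bin_diag prednK // natrM; lra.
Qed.

Lemma card_dense_boxes_step :
  #|dense_boxes m.+1 J H|%:R <= ((d ^ m.+1)%:R - 1) * q * N.
Proof.
have qN0 : 0 <= q * N.
  by rewrite mulr_ge0 ?exprn_ge0 ?mulr_ge0 ?powR_ge0 // prodr_ge0 // => i _; rewrite ler0n.
have d2R : 0 <= (d%:R - 2) * (q * N) :> R by rewrite mulr_ge0 // subr_ge0 ler_nat.
apply: (@le_trans _ _ (q * N + d%:R * (((d ^ m)%:R - 1) * q * N))); last first.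
  by rewrite expnS natrM; lra.
apply: le_trans (lerD card_dense_heavy card_dense_light).
rewrite -natrD ler_nat; apply: leq_trans (subset_leq_card dense_boxes_cover) _.
exact: leq_card_setU.
Qed.

End Step.

(* The cap is strict so that the case [m = 0] holds: [H] is then empty, whereas
   with a weak cap a single point would already make every box dense. *)
Lemma card_dense_boxes_lt m J H : #|J| = m ->
  {in H, forall f : {ffun 'I_k -> T}, {in J, forall i, f i \in V i}} ->
  coord_inj J H -> #|H|%:R < box_cap m J ->
  #|dense_boxes m J H|%:R <= ((d ^ m)%:R - 1) * q * N.
Proof.
elim: m J H => [|m IHm] J H cardJ HV Hinj HH.
  by rewrite dense_boxes0 // cards0 expn0 subrr !mul0r.
have /card_gt0P[j jJ] : (0 < #|J|)%N by rewrite cardJ.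
exact: (card_dense_boxes_step IHm jJ cardJ HV Hinj (ltW HH)).
Qed.

End DenseBoxes.

Theorem lemmaA2 (R : realType) (alpha lambda : R) (k d : nat) (T : finType)
  (V : 'I_k -> {set T}) (H : {set {ffun 'I_k -> T}}) :
  0 < alpha < 1 -> 0 < lambda < 1 -> (1 <= k)%N ->
  (2 <= d)%N -> (forall i, d <= #|V i|)%N ->
  H \subset prodset V ->
  (#|H|%:R <= (alpha * lambda) ^+ k * \prod_(i < k) (#|V i|%:R : R)) ->
  (#|[set W in dchoices d V |
       k%:R * lambda * (d ^ k)%:R < (#|H :&: prodset (fun i => W i)|%:R : R)]|%:R
   <= ((d ^ k)%:R - 1) * (2 * alpha `^ lambda) ^+ d
        * \prod_(i < k) ('C(#|V i|, d)%:R : R)).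
Proof.
move=> al01 la01 k1 d2 dV /subsetP HV HH.
have /card_gt0P[j _] : (0 < #|[set: 'I_k]|)%N by rewrite cardsT card_ord.
have := card_dense_boxes_step al01 la01 d2 dV (card_dense_boxes_lt al01 la01 d2 dV (m := k.-1))
  (in_setT j) (_ : #|[set: 'I_k]| = k.-1.+1) _ _ _.
rewrite prednK // cardsT card_ord => /(_ H erefl) card_dense.
rewrite (eq_card (B := dense_boxes lambda d V k [set: 'I_k] H)) => [|W].
  apply: card_dense => [f fH i _ | f g _ _ fg |].
  - by move/HV: fH; rewrite inE => /forallP.
  - by apply/ffunP => i; apply: fg.
  by rewrite /box_cap (eq_bigl _ _ (@in_setT _)).
rewrite !inE; congr (_ && (_ < _%:R)); apply: eq_card => f; rewrite !inE.
by congr (_ && _); apply/forallP/forall_inP => fW i => [_|]; apply: fW.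
Qed.
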